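(* Let $\mathbf i'=\zeta_k\mathbf i$ be a 6-move. The 6-move degree map $\mathbf g'\mapsto\mathbf g$ on $\mathbb Z^{\oplus\mathbb N}$ (defined in the context) sends the cone $C_{\mathbf i'}$ into the cone $C_{\mathbf i}$.
   Context: $\mathfrak g$ is a complex finite-dimensional simple Lie algebra with index set $I$ and Cartan matrix $\mathsf C=(\mathsf c_{i,j})$. $\mathbb N=\{1,2,\dots\}$, $[a]_+=\max(a,0)$. $I^{(\infty)}$: sequences $\mathbf i=(i_u)_{u\in\mathbb N}\in I^{\mathbb N}$ with every element of $I$ occurring infinitely often; $u^-_{\mathbf i}=\max(\{v<u:i_v=i_u\}\cup\{0\})$. A 6-move $\mathbf i'=\zeta_k\mathbf i$: $i_k=i_{k+2}=i_{k+4}=i'_{k+1}=i'_{k+3}=i'_{k+5}$, $i_{k+1}=i_{k+3}=i_{k+5}=i'_k=i'_{k+2}=i'_{k+4}$, $i_u=i'_u$ for $u\notin[k,k+5]$, $\mathsf c_{i_{k+1},i_k}\mathsf c_{i_k,i_{k+1}}=3$. Put $i=i_k$, $j=i_{k+1}$. The 6-move degree map: for $\mathbf g'=(g'_u)$ set $A=g'_{k+2}-\mathsf c_{j,i}[g'_{k+1}]_+$, $B=g'_{k+3}-[-g'_{k+1}]_+$, $C=-g'_{k+1}-\mathsf c_{i,j}[A]_+-[-B]_+$, $D=g'_k+\mathsf c_{j,i}[-g'_{k+1}]_+-2[-A]_++\mathsf c_{j,i}[-C]_+$, $E=-A-\mathsf c_{j,i}[C]_++[D]_+$, $F=-C+\mathsf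 c_{i,j}[-D]_+$, $G=-B-[-C]_++\mathsf c_{i,j}[-E]_++[F]_+$, $H=-D+[E]_++\mathsf c_{j,i}[-F]_+$, $I=-F+[G]_++\mathsf c_{i,j}[-H]_+$; then $g_{k^-_{\mathbf i}}=g'_{(k+1)^-_{\mathbf i'}}+[g'_{k+1}]_++[B]_+-[-G]_+-[-I]_+$ (if $k^-_{\mathbf i}>0$), $g_{(k+1)^-_{\mathbf i}}=g'_{k^-_{\mathbf i'}}+[D]_+-\mathsf c_{j,i}[F]_++2[H]_+-\mathsf c_{j,i}[I]_+$ (if $(k+1)^-_{\mathbf i}>0$), $g_k=-I$, $g_{k+1}=-H+\mathsf c_{j,i}[-I]_+$, $g_{k+2}=-G+[I]_+$, $g_{k+3}=-E+\mathsf c_{j,i}[-G]_++[H]_+$, $g_{k+4}=g'_{k+5}-[-B]_++[G]_+$, $g_{k+5}=g'_{k+4}-[-A]_+-\mathsf c_{j,i}[B]_++[E]_+$, $g_u=g'_u$ otherwise. Cone: $C_{\mathbf i}=\{\mathbf g\in\mathbb Z^{\oplus\mathbb N}:\sum_{v\ge u,\,i_v=i_u}g_v\ge0\ \forall u\in\mathbb N\}$. *)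

From mathcomp Require Import all_boot all_order all_algebra.
Set Implicit Arguments. Unset Strict Implicit. Unset Printing Implicit Defensive.
Import Order.TTheory GRing.Theory Num.Theory.
Local Open Scope ring_scope.

Definition posp (a : int) : int := Num.max a 0.

(* Cartan matrix of a complex finite-dimensional simple Lie algebra, with index
   set I: an indecomposable generalized Cartan matrix of finite type, i.e.
   c_ii = 2, c_ij <= 0 for i <> j, c_ij = 0 <-> c_ji = 0, symmetrizable by a
   positive diagonal matrix D with D C positive definite, and indecomposable. *)
Definition simple_cartan (I : finType) (C : I -> I -> int) : Prop :=
  (exists i0 : I, True) /\
  (forall i, C i i = 2) /\
  (forall i j, i != j -> C i j <= 0) /\
  (forall i j, (C i j == 0) = (C j i == 0)) /\
      (exists d : I -> int,
          (forall i, 0 < d i) /\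
          (forall i j, d i * C i j = d j * C j i) /\
          (forall x : I -> rat, (exists i, x i != 0) ->
             0 < \sum_(i : I) \sum_(j : I) x i * (d i)%:~R * (C i j)%:~R * x j)) /\
  (forall J : {set I}, J != set0 -> J != setT ->
          exists i j, [/\ i \in J, j \notin J & C i j != 0]).

(* Sequences i = (i_u)_{u in N}, N = {1,2,...}, represented as nat -> I where
   only the values at u >= 1 matter. *)
Definition infinite_seq (I : finType) (s : nat -> I) : Prop :=
  forall (a : I) (n : nat), exists u, (n < u)%N /\ s u = a.

Definition uminus (I : finType) (s : nat -> I) (u : nat) : nat :=
  \max_(1 <= v < u | s v == s u) v.

Definition six_move (I : finType) (C : I -> I -> int) (k : nat)
    (s s' : nat -> I) : Prop :=
  [/\ (0 < k)%N,
      s k = s (k+2)%N /\ s k = s (k+4)%N /\ s k = s' (k+1)%N /\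
      s k = s' (k+3)%N /\ s k = s' (k+5)%N,
      s (k+1)%N = s (k+3)%N /\ s (k+1)%N = s (k+5)%N /\ s (k+1)%N = s' k /\
      s (k+1)%N = s' (k+2)%N /\ s (k+1)%N = s' (k+4)%N,
      (forall u, (0 < u)%N -> (u < k)%N \/ (k+5 < u)%N -> s u = s' u)
    & C (s (k+1)%N) (s k) * C (s k) (s (k+1)%N) = 3].

Definition finsupp (g : nat -> int) : Prop :=
  exists N : nat, forall u, (N <= u)%N -> g u = 0.

(* the cone C_s: for all u in N, sum_{v >= u, s_v = s_u} g_v >= 0
   (the sum is finite; it is computed up to any bound beyond the support) *)
Definition in_cone (I : finType) (s : nat -> I) (g : nat -> int) : Prop :=
  forall u : nat, (0 < u)%N ->
    forall N : nat, (forall v, (N <= v)%N -> g v = 0) ->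
      0 <= \sum_(u <= v < N | s v == s u) g v.

Definition six_move_deg (I : finType) (C : I -> I -> int) (k : nat)
    (s s' : nat -> I) (g' : nat -> int) : nat -> int :=
  let i := s k in let j := s (k+1)%N in
  let cji := C j i in let cij := C i j in
  let A := g' (k+2)%N - cji * posp (g' (k+1)%N) in
  let B := g' (k+3)%N - posp (- g' (k+1)%N) in
  let C' := - g' (k+1)%N - cij * posp A - posp (- B) in
  let D := g' k + cji * posp (- g' (k+1)%N) - 2 * posp (- A) + cji * posp (- C') in
  let E := - A - cji * posp C' + posp D in
  let F := - C' + cij * posp (- D) in
  let G := - B - posp (- C') + cij * posp (- E) + posp F in
  let H := - D + posp E + cji * posp (- F) in
  let I' := - F + posp G + cij * posp (- H) in
  let km := uminus s k in let k1m := uminus s (k+1)%N in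
  fun u =>
    if (u == km) && (0 < km)%N then
      g' (uminus s' (k+1)%N) + posp (g' (k+1)%N) + posp B - posp (- G) - posp (- I')
    else if (u == k1m) && (0 < k1m)%N then
      g' (uminus s' k) + posp D - cji * posp F + 2 * posp H - cji * posp I'
    else if u == k then - I'
    else if u == (k+1)%N then - H + cji * posp (- I')
    else if u == (k+2)%N then - G + posp I'
    else if u == (k+3)%N then - E + cji * posp (- G) + posp H
    else if u == (k+4)%N then g' (k+5)%N - posp (- B) + posp G
    else if u == (k+5)%N then g' (k+4)%N - posp (- A) - cji * posp B + posp E
    else g' u.

From mathcomp Require Import all_boot all_order all_algebra.
From mathcomp Require Import zify ring.
Import Order.TTheory GRing.Theory Num.Theory.
Local Open Scope ring_scope.

(* The 6-move changes g' only on the window k, ..., k+5 and at the previous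
   occurrences k^- and (k+1)^- of the colours i = i_k and j = i_(k+1); outside
   the window the two sequences agree, and inside it they read i j i j i j and
   j i j i j i.  Since c_ij c_ji = 3, the new window values of each colour plus
   the increment at its previous occurrence add up to its old window values, so
   every cone sum starting before or after the window is unchanged.  A cone sum
   starting inside the window is a sum of new window values plus the unchanged
   tail of its colour beyond the window; a piecewise-linear case analysis on the
   signs of g'_(k+1), A, ..., I shows that it is nonnegative as soon as the cone
   sums of g' at the window positions of that colour are. *)

Lemma posp_spec (a : int) : (0 <= a /\ posp a = a) \/ (a < 0 /\ posp a = 0).
Proof.
rewrite /posp; case: (lerP 0 a) => h.
  by left; split => //; rewrite max_l.
by right; split => //; rewrite max_r // ltW.
Qed.

Lemma pospN (a : int) : posp (- a) = posp a - a.
Proof. by case: (posp_spec a) (posp_spec (- a)) => -[ha ->] [] [hb ->]; lia. Qed.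

Section DegreeWindow.

(* a = c_ij, b = c_ji and x t = g'_(k+t); deg_window t is g_(k+t), and
   deg_corr_even, deg_corr_odd are the increments of g over g' at k^- and
   (k+1)^- (for the sequence i, which are (k+1)^- and k^- for i'). *)
Variables (a b : int) (x : nat -> int).

Definition degA : int := x 2 - b * posp (x 1).
Definition degB : int := x 3 - posp (- x 1).
Definition degC : int := - x 1 - a * posp degA - posp (- degB).
Definition degD : int := x 0 + b * posp (- x 1) - 2 * posp (- degA) + b * posp (- degC).
Definition degE : int := - degA - b * posp degC + posp degD.
Definition degF : int := - degC + a * posp (- degD).
Definition degG : int := - degB - posp (- degC) + a * posp (- degE) + posp degF.
Definition degH : int := - degD + posp degE + b * posp (- degF).
Definition degI : int := - degF + posp degG + a * posp (- degH).

Definition deg_window (t : nat) : int :=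
  match t with
  | 0 => - degI
  | 1 => - degH + b * posp (- degI)
  | 2 => - degG + posp degI
  | 3 => - degE + b * posp (- degG) + posp degH
  | 4 => x 5 - posp (- degB) + posp degG
  | 5 => x 4 - posp (- degA) - b * posp degB + posp degE
  | _ => 0
  end.

Definition deg_corr_even : int := posp (x 1) + posp degB - posp (- degG) - posp (- degI).
Definition deg_corr_odd : int := posp degD - b * posp degF + 2 * posp degH - b * posp degI.

Lemma deg_intermediatesE :
  [/\ degA = x 2 - b * posp (x 1), degB = x 3 - (posp (x 1) - x 1),
      degC = - x 1 - a * posp degA - (posp degB - degB),
      degD = x 0 + b * (posp (x 1) - x 1) - 2 * (posp degA - degA) + b * (posp degC - degC)
    & degE = - degA - b * posp degC + posp degD] /\
  [/\ degF = - degC + a * (posp degD - degD),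
      degG = - degB - (posp degC - degC) + a * (posp degE - degE) + posp degF,
      degH = - degD + posp degE + b * (posp degF - degF)
    & degI = - degF + posp degG + a * (posp degH - degH)].
Proof. by split; split; rewrite -?pospN. Qed.

Lemma deg_window_sum_even :
  deg_corr_even + \sum_(0 <= t < 6 | ~~ odd t) deg_window t = \sum_(0 <= t < 6 | odd t) x t.
Proof.
rewrite unlock /= /deg_corr_even !pospN.
by case: deg_intermediatesE => -[_ eB _ _ _] _; lia.
Qed.

Lemma deg_window_sum_odd : (a = -1 /\ b = -3) \/ (a = -3 /\ b = -1) ->
  deg_corr_odd + \sum_(0 <= t < 6 | odd t) deg_window t = \sum_(0 <= t < 6 | ~~ odd t) x t.
Proof.
move=> hab; rewrite unlock /= /deg_corr_odd !pospN.
by case: deg_intermediatesE; case: hab => -[-> ->] [? ? ? ? ?] [? ? ? ?]; lia.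
Qed.

Lemma deg_window_even_tails_ge0 {T : int} :
  0 <= x 5 + T -> 0 <= x 3 + x 5 + T -> 0 <= x 1 + x 3 + x 5 + T ->
  [/\ 0 <= deg_window 4 + T, 0 <= deg_window 2 + deg_window 4 + T
    & 0 <= deg_window 0 + deg_window 2 + deg_window 4 + T].
Proof.
rewrite /= !pospN; case: deg_intermediatesE => -[_ eB _ _ _] _.
have := posp_spec (x 1); have := posp_spec degB; have := posp_spec degG.
by have := posp_spec degI; split; lia.
Qed.

Lemma deg_window_odd_tails_ge0 {T : int} : (a = -1 /\ b = -3) \/ (a = -3 /\ b = -1) ->
  0 <= x 4 + T -> 0 <= x 2 + x 4 + T -> 0 <= x 0 + x 2 + x 4 + T ->
  [/\ 0 <= deg_window 5 + T, 0 <= deg_window 3 + deg_window 5 + T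
    & 0 <= deg_window 1 + deg_window 3 + deg_window 5 + T].
Proof.
move=> hab; rewrite /= !pospN.
have := posp_spec (x 1); have := posp_spec degA; have := posp_spec degB.
have := posp_spec degC; have := posp_spec degD; have := posp_spec degE.
have := posp_spec degF; have := posp_spec degG; have := posp_spec degH.
have := posp_spec degI; have := deg_intermediatesE.
by case: hab => -[-> ->] -[[? ? ? ? ?] [? ? ? ?]] *; split; lia.
Qed.

Lemma deg_window_tails_ge0 (Ti Tj : int) : (a = -1 /\ b = -3) \/ (a = -3 /\ b = -1) ->
  (forall r, (r < 6)%N ->
     0 <= \sum_(r <= t < 6 | odd t == odd r) x t + (if odd r then Ti else Tj)) ->
  forall r, (r < 6)%N ->
     0 <= \sum_(r <= t < 6 | odd t == odd r) deg_window t + (if odd r then Tj else Ti).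
Proof.
move=> hab hx r hr; have := hx 1%N; have := hx 3%N; have := hx 5%N.
have := hx 0%N; have := hx 2%N; have := hx 4%N.
rewrite unlock /= !addr0 !addrA => h4 h2 h0 h5 h3 h1.
have [e4 e2 e0] := deg_window_even_tails_ge0 (h5 isT) (h3 isT) (h1 isT).
have [o5 o3 o1] := deg_window_odd_tails_ge0 hab (h4 isT) (h2 isT) (h0 isT).
move: e4 e2 e0 o5 o3 o1; rewrite /= => *.
by case: r hr => [|[|[|[|[|[|r]]]]]] //= _; lia.
Qed.

End DegreeWindow.

Lemma uminus_ge (I : finType) (s : nat -> I) u v :
  (0 < v < u)%N -> s v = s u -> (v <= uminus s u)%N.
Proof.
move=> hv svu; rewrite /uminus.
by apply: (@leq_bigmax_seq _ _ _ id v); rewrite ?mem_index_iota //= svu.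
Qed.

Lemma uminus_spec (I : finType) (s : nat -> I) u :
  (0 < uminus s u)%N -> (uminus s u < u)%N /\ s (uminus s u) = s u.
Proof.
rewrite /uminus big_nat_cond.
elim/big_ind: _ => [//|m n hm hn|v /andP[/andP[_ hv] /eqP]] //.
by rewrite /maxn; case: ifP.
Qed.

Lemma neq_uminus (I : finType) (s : nat -> I) u v :
  (0 < v)%N -> s v != s u -> v != uminus s u.
Proof.
move=> v0; apply: contraNneq => e; rewrite e.
by case: (@uminus_spec _ s u) => [|_ ->]; rewrite // -e.
Qed.

Lemma eq_big_nat_cond (R : Type) (idx : R) (op : R -> R -> R)
    (f g : nat -> R) (P Q : pred nat) m n :
  (forall v, (m <= v < n)%N -> P v = Q v) ->
  (forall v, (m <= v < n)%N -> P v -> f v = g v) ->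
  \big[op/idx]_(m <= v < n | P v) f v = \big[op/idx]_(m <= v < n | Q v) g v.
Proof.
move=> ePQ efg; rewrite big_nat_cond [RHS]big_nat_cond.
apply: eq_big => [v | v /andP[hv Pv]]; last exact: efg.
by case: (boolP (m <= v < n)%N) => // hv; rewrite ePQ.
Qed.

Lemma big_nat_cond_eq_but (f g : nat -> int) (P : pred nat) m n p :
  (m <= p < n)%N -> P p ->
  (forall v, (m <= v < n)%N -> P v -> v != p -> f v = g v) ->
  \sum_(m <= v < n | P v) f v = \sum_(m <= v < n | P v) g v + (f p - g p).
Proof.
move=> /andP[hmp hpn] Pp efg.
rewrite !(big_cat_nat hmp (ltnW hpn)) /= !(big_ltn_cond hpn) Pp.
have e1 : \sum_(m <= v < p | P v) f v = \sum_(m <= v < p | P v) g v.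
  by apply: eq_big_nat_cond => // v hv Pv; apply: efg => //; lia.
have e2 : \sum_(p.+1 <= v < n | P v) f v = \sum_(p.+1 <= v < n | P v) g v.
  by apply: eq_big_nat_cond => // v hv Pv; apply: efg => //; lia.
by rewrite e1 e2; ring.
Qed.

Arguments big_nat_cond_eq_but {f g P m n} p.

Lemma big_nat_widen_vanish (f : nat -> int) (P : pred nat) m N M :
  (forall v, (N <= v)%N -> f v = 0) -> (N <= M)%N ->
  \sum_(m <= v < N | P v) f v = \sum_(m <= v < M | P v) f v.
Proof.
move=> f0 hNM; rewrite (big_nat_widen _ _ _ _ _ hNM) [RHS](bigID (fun v => (v < N)%N)) /=.
by rewrite [X in _ = _ + X]big1 ?addr0 // => v /andP[_]; rewrite -leqNgt; apply: f0.
Qed.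

Arguments big_nat_widen_vanish {f P m N} M.

Lemma big_nat_window (f : nat -> int) (P : pred nat) k r n M :
  (r <= n)%N -> (k + n <= M)%N ->
  \sum_(k + r <= v < M | P v) f v =
    \sum_(r <= t < n | P (k + t)%N) f (k + t)%N + \sum_(k + n <= v < M | P v) f v.
Proof.
move=> hrn hnM; rewrite (big_cat_nat _ hnM) ?leq_add2l //= [(k + r)%N]addnC big_addn addKn.
by congr (_ + _); apply: eq_big => [t|t _]; rewrite addnC.
Qed.

Lemma nonpos_mul_eq3 (a b : int) : a <= 0 -> b <= 0 -> a * b = 3 ->
  (a = -1 /\ b = -3) \/ (a = -3 /\ b = -1).
Proof.
move=> ha hb hab.
have a_ne0 : a != 0 by apply: contra_eq_neq hab => ->; rewrite mul0r.
have b_ne0 : b != 0 by apply: contra_eq_neq hab => ->; rewrite mulr0.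
have : 0 <= a * (b + 1) by rewrite mulr_le0 //; lia.
have : 0 <= (a + 1) * b by rewrite mulr_le0 //; lia.
by rewrite mulrDl mulrDr mul1r mulr1 hab; nia.
Qed.

Lemma sum_alternating_window (I : eqType) (σ : nat -> I) (p q : I) (f : nat -> int) k r M :
  p != q -> (forall t, (t < 6)%N -> σ (k + t)%N = if odd t then q else p) ->
  (r < 6)%N -> (k + 6 <= M)%N ->
  \sum_(k + r <= v < M | σ v == σ (k + r)%N) f v =
    \sum_(r <= t < 6 | odd t == odd r) f (k + t)%N +
    \sum_(k + 6 <= v < M | σ v == if odd r then q else p) f v.
Proof.
move=> pq hσ hr hM; rewrite (big_nat_window f _ k r 6 M (ltnW hr) hM) hσ //.
congr (_ + _); apply: eq_big_nat_cond => // t ht; rewrite hσ; last lia.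
by case: (odd t); case: (odd r); rewrite ?eqxx // ?(negbTE pq) // eq_sym (negbTE pq).
Qed.

Arguments sum_alternating_window {I σ p q f k r M}.

Lemma sum_window_color (I : eqType) (σ : nat -> I) (p q : I) k :
  p != q -> (forall t, (t < 6)%N -> σ (k + t)%N = if odd t then q else p) ->
  forall c (f : nat -> int), \sum_(0 <= t < 6 | σ (k + t)%N == c) f t =
    \sum_(0 <= t < 6 | if c == p then ~~ odd t else if c == q then odd t else false) f t.
Proof.
move=> pq hσ c f; apply: eq_big_nat_cond => // t ht; rewrite hσ //.
have [->|cp] := eqVneq c p; first by case: odd; rewrite ?eqxx // eq_sym (negbTE pq).
have [ecq|cq] := eqVneq c q.
  by rewrite ecq in cp *; case: odd; rewrite ?eqxx // (negbTE pq).
by case: odd; rewrite eq_sym ?(negbTE cp) ?(negbTE cq).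
Qed.

Arguments sum_window_color {I σ p q k}.

Section SixMove.

Context {I : finType} {C : I -> I -> int} {k : nat} {s s' : nat -> I}.
Hypotheses (hC : simple_cartan C) (hmove : six_move C k s s').

Lemma six_move_neq : s k != s (k + 1)%N.
Proof.
case: hmove => _ _ _ _ h3; case: hC => _ [hdiag _].
by apply/eqP => e; move: h3; rewrite -e hdiag; lia.
Qed.

Lemma six_move_cartan :
  (C (s k) (s (k + 1)%N) = -1 /\ C (s (k + 1)%N) (s k) = -3) \/
  (C (s k) (s (k + 1)%N) = -3 /\ C (s (k + 1)%N) (s k) = -1).
Proof.
case: hmove => _ _ _ _ h3; case: hC => _ [_ [hoff _]].
have neq := six_move_neq.
by apply: nonpos_mul_eq3; rewrite 1?mulrC // hoff // eq_sym.
Qed.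

Lemma six_move_window t : (t < 6)%N ->
  s (k + t)%N = (if odd t then s (k + 1)%N else s k) /\
  s' (k + t)%N = (if odd t then s k else s (k + 1)%N).
Proof.
case: hmove => _ [e2 [e4 [e1 [e3 e5]]]] [f3 [f5 [f0 [f2 f4]]]] _ _.
by case: t => [|[|[|[|[|[|t]]]]]] //= _; rewrite ?addn0.
Qed.

Lemma six_move_outside v : (0 < v)%N -> (v < k)%N \/ (k + 5 < v)%N -> s' v = s v.
Proof. by case: hmove => _ _ _ hout _ v0 /(hout _ v0). Qed.

Lemma uminus_six_move :
  uminus s' (k + 1)%N = uminus s k /\ uminus s' k = uminus s (k + 1)%N.
Proof.
have k0 : (0 < k)%N by case: hmove.
have neq := six_move_neq.
have [_ e1] := six_move_window 1%N isT; have [_ e0] := six_move_window 0%N isT.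
rewrite addn0 /= in e0 e1.
have same c : \max_(1 <= v < k | s' v == c) v = \max_(1 <= v < k | s v == c) v.
  by apply: eq_big_nat_cond => // v hv; rewrite six_move_outside //; lia.
have kk : (k < k + 1)%N by rewrite addn1.
have kk' : (k + 1 <= k.+1)%N by rewrite addn1.
rewrite /uminus e1 e0 !(@big_cat_nat _ _ _ k 1%N (k + 1)%N) ?leq_addr //.
rewrite !(big_ltn_cond kk) !(big_geq kk') e0 (negbTE neq) eq_sym (negbTE neq) /=.
by rewrite !maxn0 same; split.
Qed.

Lemma uminus_lt : (0 < uminus s k)%N -> (uminus s k < k)%N.
Proof. by case/uminus_spec. Qed.

Lemma uminus1_lt : (0 < uminus s (k + 1)%N)%N -> (uminus s (k + 1)%N < k)%N.
Proof.
case/uminus_spec => lt e.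
have : uminus s (k + 1)%N != k by apply: contraNneq six_move_neq => ek; rewrite -e ek.
lia.
Qed.

Lemma uminus_neq :
  (0 < uminus s k)%N -> (0 < uminus s (k + 1)%N)%N -> uminus s k != uminus s (k + 1)%N.
Proof.
case/uminus_spec => _ e0 /uminus_spec[_ e1].
by apply: contraNneq six_move_neq => e; rewrite -e0 -e1 e.
Qed.

Context {g' : nat -> int}.

Local Notation a := (C (s k) (s (k + 1)%N)).
Local Notation b := (C (s (k + 1)%N) (s k)).
Local Notation x := (fun t => g' (k + t)%N).
Local Notation G := (six_move_deg C k s s' g').

Lemma six_move_degE u : G u =
  if (u == uminus s k) && (0 < uminus s k)%N then g' (uminus s k) + deg_corr_even a b x
  else if (u == uminus s (k + 1)%N) && (0 < uminus s (k + 1)%N)%N then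
    g' (uminus s (k + 1)%N) + deg_corr_odd a b x
  else if u == k then deg_window a b x 0
  else if u == (k + 1)%N then deg_window a b x 1
  else if u == (k + 2)%N then deg_window a b x 2
  else if u == (k + 3)%N then deg_window a b x 3
  else if u == (k + 4)%N then deg_window a b x 4
  else if u == (k + 5)%N then deg_window a b x 5
  else g' u.
Proof.
rewrite /six_move_deg (proj1 uminus_six_move) (proj2 uminus_six_move).
rewrite /deg_corr_even /deg_corr_odd /deg_window /degI /degH /degG /degF /degE /degD.
(* x 0 = g' (k + 0) is not convertible to the g' k of the definition. *)
by rewrite /degC /degB /degA /= addn0 !addrA.
Qed.

Lemma deg_at_uminus :
  (0 < uminus s k)%N -> G (uminus s k) = g' (uminus s k) + deg_corr_even a b x.
Proof. by move=> km0; rewrite six_move_degE eqxx km0. Qed.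

Lemma deg_at_uminus1 : (0 < uminus s (k + 1)%N)%N ->
  G (uminus s (k + 1)%N) = g' (uminus s (k + 1)%N) + deg_corr_odd a b x.
Proof.
move=> k1m0; rewrite six_move_degE eqxx k1m0 ifF //.
by case: (posnP (uminus s k)) => [->|km0]; rewrite ?andbF // eq_sym (negbTE (uminus_neq _ _)).
Qed.

Lemma deg_window_at t : (t < 6)%N -> G (k + t)%N = deg_window a b x t.
Proof.
have := uminus_lt; have := uminus1_lt => hk1m hkm ht.
rewrite six_move_degE; do 2 ?[rewrite ifF; last lia].
by case: t ht => [|[|[|[|[|[|t]]]]]] // _; rewrite ?addn0 eqxx //; do ?[rewrite ifF; last lia].
Qed.

Lemma deg_outside v : (0 < v)%N -> (v < k)%N \/ (k + 5 < v)%N ->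
  v != uminus s k -> v != uminus s (k + 1)%N -> G v = g' v.
Proof.
move=> v0 hv hkm hk1m; rewrite six_move_degE.
by rewrite (negbTE hkm) (negbTE hk1m); do ?[rewrite ifF; last lia].
Qed.

Definition deg_corr (c : I) : int :=
  if c == s k then deg_corr_even a b x
  else if c == s (k + 1)%N then deg_corr_odd a b x else 0.

Lemma deg_window_sum c :
  \sum_(0 <= t < 6 | s (k + t)%N == c) deg_window a b x t + deg_corr c =
  \sum_(0 <= t < 6 | s' (k + t)%N == c) g' (k + t)%N.
Proof.
have neq := six_move_neq; have neq' : s (k + 1)%N != s k by rewrite eq_sym.
rewrite (sum_window_color neq (fun t ht => proj1 (six_move_window t ht))).
rewrite (sum_window_color neq' (fun t ht => proj2 (six_move_window t ht))) /deg_corr.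
have [-> | _] := eqVneq c (s k).
  by rewrite ?eqxx (negbTE neq) addrC; exact: deg_window_sum_even.
have [_ | _] := eqVneq c (s (k + 1)%N).
  by rewrite addrC; exact: deg_window_sum_odd six_move_cartan.
by rewrite !big_pred0 ?addr0.
Qed.

Lemma deg_sum_before u : (0 < u < k)%N ->
  \sum_(u <= v < k | s v == s u) G v =
    \sum_(u <= v < k | s' v == s u) g' v + deg_corr (s u).
Proof.
move=> hu; have neq := six_move_neq; rewrite /deg_corr.
have -> : \sum_(u <= v < k | s' v == s u) g' v = \sum_(u <= v < k | s v == s u) g' v.
  by apply: eq_big_nat_cond => // v hv; rewrite six_move_outside //; lia.
have [eu|nek] := eqVneq (s u) (s k).
  have ukm := @uminus_ge _ s k u hu eu.
  have km0 : (0 < uminus s k)%N by lia.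
  rewrite (big_nat_cond_eq_but (g := g') (uminus s k)).
  - by rewrite deg_at_uminus // addrAC subrr add0r.
  - by rewrite ukm uminus_lt.
  - by rewrite (proj2 (uminus_spec _ _ _ km0)) eu.
  move=> v hv /eqP svu vkm; apply: deg_outside vkm _; [lia | lia |].
  by apply: neq_uminus; [lia | rewrite svu eu].
have [eu|nek1] := eqVneq (s u) (s (k + 1)%N).
  have hu1 : (0 < u < k + 1)%N by lia.
  have uk1m := @uminus_ge _ s (k + 1)%N u hu1 eu.
  have k1m0 : (0 < uminus s (k + 1)%N)%N by lia.
  rewrite (big_nat_cond_eq_but (g := g') (uminus s (k + 1)%N)).
  - by rewrite deg_at_uminus1 // addrAC subrr add0r.
  - by rewrite uk1m uminus1_lt.
  - by rewrite (proj2 (uminus_spec _ _ _ k1m0)) eu.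
  move=> v hv /eqP svu vk1m; apply: deg_outside _ vk1m; [lia | lia |].
  by apply: neq_uminus; [lia | rewrite svu eu eq_sym].
rewrite addr0; apply: eq_big_nat_cond => // v hv /eqP svu.
by apply: deg_outside; [lia | lia | apply: neq_uminus; rewrite ?svu //; lia ..].
Qed.

Context {M : nat}.

Lemma deg_tail_after w c : (k + 6 <= w)%N ->
  \sum_(w <= v < M | s v == c) G v = \sum_(w <= v < M | s' v == c) g' v.
Proof.
have := uminus_lt; have := uminus1_lt => hk1m hkm hw.
apply: eq_big_nat_cond => v hv; first by rewrite six_move_outside //; lia.
by move=> _; apply: deg_outside; lia.
Qed.

Hypothesis hM : (k + 6 <= M)%N.

Lemma deg_tail_window r : (r < 6)%N ->
  (forall w, (0 < w)%N -> 0 <= \sum_(w <= v < M | s' v == s' w) g' v) ->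
  0 <= \sum_(k + r <= v < M | s v == s (k + r)%N) G v.
Proof.
move=> hr hcone; have neq := six_move_neq.
have neq' : s (k + 1)%N != s k by rewrite eq_sym.
set Ti := \sum_(k + 6 <= v < M | s' v == s k) g' v.
set Tj := \sum_(k + 6 <= v < M | s' v == s (k + 1)%N) g' v.
rewrite (sum_alternating_window neq (fun t ht => proj1 (six_move_window t ht)) hr hM).
rewrite deg_tail_after //.
have -> : \sum_(k + 6 <= v < M | s' v == if odd r then s (k + 1)%N else s k) g' v =
  if odd r then Tj else Ti by case: (odd r).
have -> : \sum_(r <= t < 6 | odd t == odd r) G (k + t)%N =
  \sum_(r <= t < 6 | odd t == odd r) deg_window a b x t.
  by apply: eq_big_nat_cond => // t ht _; rewrite deg_window_at //; lia.
apply: (deg_window_tails_ge0 _ _ _ Ti Tj six_move_cartan _ r hr) => r' hr'.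
have k0 : (0 < k)%N by case: hmove.
have := hcone (k + r')%N (ltn_addr r' k0).
rewrite (sum_alternating_window neq' (fun t ht => proj2 (six_move_window t ht)) hr' hM).
by case: (odd r').
Qed.

Lemma deg_tail_before u : (0 < u < k)%N ->
  \sum_(u <= v < M | s v == s u) G v = \sum_(u <= v < M | s' v == s' u) g' v.
Proof.
move=> hu; have -> : s' u = s u by rewrite six_move_outside //; lia.
have hk : (u <= k)%N by lia.
have hkM : (k <= M)%N by lia.
have win (f : nat -> int) P := big_nat_window f P k 0 6 M (leq0n 6) hM.
rewrite addn0 in win.
rewrite !(big_cat_nat hk hkM) /= deg_sum_before // !win deg_tail_after //.
rewrite -(deg_window_sum (s u)).
have -> : \sum_(0 <= t < 6 | s (k + t)%N == s u) G (k + t)%N =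
    \sum_(0 <= t < 6 | s (k + t)%N == s u) deg_window a b x t.
  by apply: eq_big_nat_cond => // t ht _; rewrite deg_window_at.
ring.
Qed.

End SixMove.

Theorem lemma3p14 (I : finType) (C : I -> I -> int) (k : nat)
    (s s' : nat -> I) (g' : nat -> int) :
  simple_cartan C ->
  infinite_seq s -> infinite_seq s' ->
  six_move C k s s' ->
  finsupp g' ->
  in_cone s' g' ->
  in_cone s (six_move_deg C k s s' g').
Proof.
move=> hC _ _ hmove [N' hN'] hcone u u0 N hN.
pose M := maxn (maxn N N') (k + 6).
have hM : (k + 6 <= M)%N by rewrite leq_maxr.
have hcone' w : (0 < w)%N -> 0 <= \sum_(w <= v < M | s' v == s' w) g' v.
  by move=> w0; apply: hcone => // v hv; apply: hN'; move: hv; rewrite /M; lia.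
rewrite (big_nat_widen_vanish M hN); last by rewrite /M; lia.
have [ltuk | leku] := ltnP u k.
  by rewrite (deg_tail_before hC hmove hM) ?u0 //; exact: hcone'.
have [ltu | leu] := ltnP (k + 5) u.
  rewrite (deg_tail_after hC hmove) -?(six_move_outside hmove) //; try lia.
  exact: hcone'.
have -> : u = (k + (u - k))%N by lia.
by apply: (deg_tail_window hC hmove hM) => //; lia.
Qed.
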